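(* Let $n\ge2$, $\omega\in\mathbb{R}^n$, $k\in\mathbb{R}_{>0}^n$ satisfy (IC1) $\sum_\mu\omega_\mu=0$, (IC2) $\omega\ne0$, (IC3) $\left|\frac{\omega_1}{k_1}\right|\le\cdots\le\left|\frac{\omega_n}{k_n}\right|$. Let $\sigma\in\{-1,+1\}^n$ and $f_\sigma(R)=-R+\frac1n\sum_{\mu=1}^n\sigma_\mu\sqrt{k_\mu^2R-\omega_\mu^2}$. If $s_\ell=\sum_{\mu=1}^\ell\sigma_\mu k_\mu\le0$ for all $\ell=1,\ldots,n$, then $f_\sigma$ has no positive roots.
   Context: Square roots are nonnegative real square roots; a positive root of $f_\sigma$ is a real $R>0$ with $k_\mu^2R-\omega_\mu^2\ge0$ for all $\mu$ and $f_\sigma(R)=0$. *)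

From mathcomp Require Import all_boot all_order all_algebra.
Set Implicit Arguments. Unset Strict Implicit. Unset Printing Implicit Defensive.
Import Order.TTheory GRing.Theory Num.Theory.
Local Open Scope ring_scope.

Definition f_sigma (R : rcfType) (n : nat) (omega k sigma : 'I_n -> R)
    (x : R) : R :=
  - x + n%:R^-1 * \sum_(mu < n) sigma mu * Num.sqrt (k mu ^+ 2 * x - omega mu ^+ 2).

Definition positive_root (R : rcfType) (n : nat) (omega k sigma : 'I_n -> R)
    (x : R) : Prop :=
  0 < x /\ (forall mu, 0 <= k mu ^+ 2 * x - omega mu ^+ 2) /\
  f_sigma omega k sigma x = 0.

From mathcomp Require Import all_boot all_order all_algebra.
From mathcomp Require Import ring lra.
Set Implicit Arguments. Unset Strict Implicit. Unset Printing Implicit Defensive.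
Import Order.TTheory GRing.Theory Num.Theory.
Local Open Scope ring_scope.

(* Writing sqrt (k^2 R - w^2) = k a with a = sqrt (R - (w/k)^2), condition
   (IC3) makes the weights a nonincreasing and nonnegative, so by Abel
   summation the sum of the sigma k a is a nonnegative combination of the
   partial sums s_l <= 0.  Hence f_sigma(R) <= -R < 0 for every R > 0. *)

Section AbelSummation.

Variables (R : realDomainType) (b a : nat -> R) (m : nat).
Hypothesis a_nonincr : forall i, (i.+1 < m)%N -> a i.+1 <= a i.
Hypothesis partial_sums_le0 : forall l, (1 <= l <= m)%N -> \sum_(i < l) b i <= 0.

Lemma abel_partial_sum_le j : (j < m)%N ->
  \sum_(i < j.+1) b i * a i <= (\sum_(i < j.+1) b i) * a j.
Proof.
elim: j => [|j IH] ltjm; first by rewrite !big_ord_recr !big_ord0 /= !add0r.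
rewrite big_ord_recr /= [X in _ <= X * _]big_ord_recr /= mulrDl lerD2r.
apply: le_trans (IH (ltnW ltjm)) _.
by have := ler_wnM2l (partial_sums_le0 (l := j.+1) (ltnW ltjm)) (a_nonincr ltjm).
Qed.

Lemma abel_sum_le0 : (forall i, 0 <= a i) -> \sum_(i < m) b i * a i <= 0.
Proof.
move=> a_ge0; have [->|m_gt0] := posnP m; first by rewrite big_ord0.
have lt_pred : (m.-1 < m)%N by rewrite ltn_predL.
have := abel_partial_sum_le lt_pred; rewrite prednK // => le_partial.
apply: le_trans le_partial _.
by rewrite mulr_le0_ge0 // partial_sums_le0 // m_gt0 leqnn.
Qed.

End AbelSummation.

Lemma sub_sqr_scale (R : fieldType) (x w c : R) : c != 0 ->
  c ^+ 2 * x - w ^+ 2 = c ^+ 2 * (x - (w / c) ^+ 2).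
Proof. by move=> c_neq0; field. Qed.

Lemma sqrt_sub_sqr_scale (R : rcfType) (x w c : R) : 0 < c ->
  Num.sqrt (c ^+ 2 * x - w ^+ 2) = c * Num.sqrt (x - (w / c) ^+ 2).
Proof.
move=> c_gt0; rewrite sub_sqr_scale ?gt_eqF //.
by rewrite sqrtrM ?sqr_ge0 // sqrtr_sqr gtr0_norm.
Qed.

Lemma sub_sqr_div_ge0 (R : rcfType) (x w c : R) : 0 < c ->
  0 <= c ^+ 2 * x - w ^+ 2 -> 0 <= x - (w / c) ^+ 2.
Proof.
by move=> c_gt0; rewrite sub_sqr_scale ?gt_eqF // pmulr_rge0 // exprn_gt0.
Qed.

Lemma ler_sqrt_sub_sqr (R : rcfType) (x u v : R) : `|u| <= `|v| ->
  0 <= x - u ^+ 2 -> Num.sqrt (x - v ^+ 2) <= Num.sqrt (x - u ^+ 2).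
Proof.
move=> le_uv ge0_u; rewrite ler_sqrt // lerD2l lerN2.
by rewrite -(real_normK (num_real u)) -(real_normK (num_real v)) lerXn2r ?nnegrE.
Qed.

Section SignedSum.

Variables (R : rcfType) (n : nat) (omega k sigma : 'I_n -> R).
Hypothesis k_gt0 : forall mu, 0 < k mu.
Hypothesis ratio_mono : forall mu nu : 'I_n, (mu <= nu)%N ->
  `|omega mu / k mu| <= `|omega nu / k nu|.
Hypothesis partial_sums_le0 : forall l : nat, (1 <= l <= n)%N ->
  \sum_(mu < n | (mu < l)%N) sigma mu * k mu <= 0.

Lemma signed_sqrt_sum_le0 (x : R) :
  (forall mu, 0 <= k mu ^+ 2 * x - omega mu ^+ 2) ->
  \sum_(mu < n) sigma mu * Num.sqrt (k mu ^+ 2 * x - omega mu ^+ 2) <= 0.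
Proof.
move=> rad_ge0; case: n omega k sigma k_gt0 ratio_mono partial_sums_le0 rad_ge0
  => [|n'] w c s c_gt0 w_mono s_le0 rad_ge0; first by rewrite big_ord0.
pose b i := s (inord i) * c (inord i).
pose a i := Num.sqrt (x - (w (inord i) / c (inord i)) ^+ 2).
rewrite (eq_bigr (fun i : 'I_n'.+1 => b i * a i)); last first.
  by move=> i _; rewrite /b /a inord_val sqrt_sub_sqr_scale // mulrA.
apply: abel_sum_le0 => [i lti|l /andP[l_ge1 l_le]|i]; last exact: sqrtr_ge0.
- rewrite /a ler_sqrt_sub_sqr ?sub_sqr_div_ge0 //.
  by apply: w_mono; rewrite !inordK // ltnW.
- rewrite (big_ord_widen _ (fun i => b i) l_le).
  under eq_bigr do rewrite /b inord_val.
  by apply: s_le0; rewrite l_ge1.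
Qed.

Lemma f_sigma_lt0 (x : R) : 0 < x ->
  (forall mu, 0 <= k mu ^+ 2 * x - omega mu ^+ 2) ->
  f_sigma omega k sigma x < 0.
Proof.
move=> x_gt0 rad_ge0; rewrite /f_sigma.
have inv_n_ge0 : 0 <= n%:R^-1 :> R by rewrite invr_ge0.
have := mulr_ge0_le0 inv_n_ge0 (signed_sqrt_sum_le0 rad_ge0).
lra.
Qed.

End SignedSum.

Theorem proposition2 (R : rcfType) (n : nat) (omega k sigma : 'I_n -> R) :
  (2 <= n)%N ->
  (forall mu, 0 < k mu) ->
  \sum_(mu < n) omega mu = 0 ->
  (exists mu, omega mu != 0) ->
  (forall mu nu : 'I_n, (mu <= nu)%N ->
      `|omega mu / k mu| <= `|omega nu / k nu|) ->
  (forall mu, sigma mu = 1 \/ sigma mu = -1) ->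
  (forall l : nat, (1 <= l <= n)%N ->
      \sum_(mu < n | (mu < l)%N) sigma mu * k mu <= 0) ->
  ~ (exists x : R, positive_root omega k sigma x).
Proof.
move=> _ k_gt0 _ _ ratio_mono _ partial_sums_le0 [x [x_gt0 [rad_ge0 root_x]]].
have := f_sigma_lt0 k_gt0 ratio_mono partial_sums_le0 x_gt0 rad_ge0.
by rewrite root_x ltxx.
Qed.
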